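(* Let $\mathbf{B}\in\dot{\mathbb{P}}(\mathbb{L}(\mathbf{C}))$ with $|\mathbf{B}|=|\mathbf{C}|$. Then $\mathbf{B}$ is a minimal sufficient cause for $D$ relative to $\mathbf{C}$ for some individual $\omega^*\in\Omega$ if and only if $\mathbf{B}$ is irreducible for $\mathcal{D}(\mathbf{C},\Omega)$.
   Context: An event is a binary random variable on a population $\Omega$; $\overline{X}=1-X$; $\mathbb{L}(\mathbf{C})=\mathbf{C}\cup\{\overline{X}:X\in\mathbf{C}\}$; $\dot{\mathbb{P}}(\mathbb{L}(\mathbf{C}))$ is the set of subsets of $\mathbb{L}(\mathbf{C})$ not containing both $X$ and $\overline{X}$ for any $X$; $(L)_{\mathbf{c}}$ is the value of literal $L$ under assignment $\mathbf{c}$ to $\mathbf{C}$; $\bigwedge(\mathbf{B})=\min_{L\in\mathbf{B}}L$. Potential outcomes $\mathcal{D}(\mathbf{C},\Omega)$: values $D_{\mathbf{c}}(\omega)\in\{0,1\}$ for all $\omega\in\Omega$ and assignments $\mathbf{c}$. A set $\mathbf{B}\subseteq\mathbb{L}(\mathbf{C})$ is a sufficient cause for $D$ relative to $\mathbf{C}$ in a nonempty $\Omega^*\subseteq\Omega$ if there exists $\mathbf{c}^*$ with $(\bigwedge(\mathbf{B}))_{\mathbf{c}^*}=1$ and for all $\mathbf{c}$ with $(\bigwedge(\mathbf{B}))_{\mathbf{c}}=1$ one has $D_{\mathbf{c}}(\omega)=1$ for all $\omega\in\Omega^*$; it is a minimal sufficient cause if in addition no proper subset of $\mathbf{B}$ is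 a sufficient cause for $D$ in $\Omega^*$. ''For $\omega^*$'' means $\Omega^*=\{\omega^*\}$. A sufficient cause representation $(\mathbf{A},\mathfrak{B})$ for $\mathcal{D}(\mathbf{C},\Omega)$ is a tuple $\mathbf{A}=\langle A_1,\dots,A_p\rangle$ of binary random variables on $\Omega$ unaffected by interventions on $\mathbf{C}$ and a tuple $\mathfrak{B}=\langle\mathbf{B}_1,\dots,\mathbf{B}_p\rangle$, $\mathbf{B}_i\in\dot{\mathbb{P}}(\mathbb{L}(\mathbf{C}))$, such that for all $\omega,\mathbf{c}$: $D_{\mathbf{c}}(\omega)=1$ iff some $j$ has $A_j(\omega)=1$ and $(\bigwedge(\mathbf{B}_j))_{\mathbf{c}}=1$. $\mathbf{B}\in\dot{\mathbb{P}}(\mathbb{L}(\mathbf{C}))$ is irreducible for $\mathcal{D}(\mathbf{C},\Omega)$ if in every such representation some $\mathbf{B}_i\in\mathfrak{B}$ satisfies $\mathbf{B}\subseteq\mathbf{B}_i$. *)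

From mathcomp Require Import all_boot.
Set Implicit Arguments. Unset Strict Implicit. Unset Printing Implicit Defensive.

(* The variables C are indexed by a finite type V.
   A literal is a pair (X, b): (X, true) stands for X, (X, false) for its
   complement 1 - X.  L(C) = V * bool. *)
Definition literal (V : finType) := (V * bool)%type.

Definition assignment (V : finType) := {ffun V -> bool}.

Definition lit_val (V : finType) (L : literal V) (c : assignment V) : bool :=
  if L.2 then c L.1 else ~~ c L.1.

(* B belongs to P-dot(L(C)): no variable occurs with both polarities. *)
Definition consistent (V : finType) (B : {set literal V}) : Prop :=
  forall X : V, ~ ((X, true) \in B /\ (X, false) \in B).

Definition conj_val (V : finType) (B : {set literal V}) (c : assignment V) : bool :=
  [forall L in B, lit_val L c].

Definition outcomes (V : finType) (Omega : Type) := assignment V -> Omega -> bool.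

Definition sufficient_cause (V : finType) (Omega : Type) (D : outcomes V Omega)
    (OmegaS : Omega -> Prop) (B : {set literal V}) : Prop :=
  (exists cs : assignment V, conj_val B cs) /\
  (forall c : assignment V, conj_val B c -> forall w, OmegaS w -> D c w).

Definition minimal_sufficient_cause (V : finType) (Omega : Type)
    (D : outcomes V Omega) (OmegaS : Omega -> Prop) (B : {set literal V}) : Prop :=
  sufficient_cause D OmegaS B /\
  (forall B' : {set literal V}, B' \proper B -> ~ sufficient_cause D OmegaS B').

Definition sc_representation (V : finType) (Omega : Type) (D : outcomes V Omega)
    (p : nat) (A : 'I_p -> Omega -> bool) (Bs : 'I_p -> {set literal V}) : Prop :=
  (forall i, consistent (Bs i)) /\
  (forall (w : Omega) (c : assignment V),
      D c w = [exists j : 'I_p, A j w && conj_val (Bs j) c]).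

Definition irreducible (V : finType) (Omega : Type) (D : outcomes V Omega)
    (B : {set literal V}) : Prop :=
  forall (p : nat) (A : 'I_p -> Omega -> bool) (Bs : 'I_p -> {set literal V}),
    sc_representation D A Bs -> exists i : 'I_p, B \subset Bs i.

From Stdlib Require Import Classical.
From mathcomp Require Import all_boot.

Set Implicit Arguments. Unset Strict Implicit. Unset Printing Implicit Defensive.

(* A consistent set B of literals with |B| = |C| mentions every variable once,
   so it is satisfied by a unique assignment c_B, and a conjunction S holds at
   c_B iff S is a subset of B; moreover B is a maximal consistent set.
   - (=>) If B is minimal sufficient for w0, then D_{c_B}(w0) = 1, so any
     representation has a component j active at w0 with B_j a subset of B.
     That B_j is itself sufficient for w0, so by minimality B_j = B.
   - (<=) Every outcome is explained by minimal sufficient causes: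
     D_c(w) = 1 iff some S minimal sufficient for w holds at c.  If B were
     minimal sufficient for no individual, the components indexed by the
     satisfiable sets S <> B, with A_S(w) = [S is minimal sufficient for w],
     would form a representation; irreducibility then yields a consistent
     S <> B containing B, contradicting the maximality of B. *)

Section Literals.
Variable V : finType.
Implicit Types (S B : {set literal V}) (c : assignment V).

Lemma conj_valP S c : reflect (forall L, L \in S -> lit_val L c) (conj_val S c).
Proof.
apply: (iffP forallP) => [H L HL | H L]; first exact: (implyP (H L) HL).
by apply/implyP; apply: H.
Qed.

Lemma conj_val_sub S S' c : S \subset S' -> conj_val S' c -> conj_val S c.
Proof. by move=> /subsetP HS /conj_valP H; apply/conj_valP => L /HS; apply: H. Qed.

Definition satisfiable S : bool := [exists c, conj_val S c].

Lemma satisfiable_consistent S : satisfiable S -> consistent S.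
Proof.
case/existsP=> c /conj_valP Hc X [HXt HXf].
by move: (Hc _ HXt) (Hc _ HXf); rewrite /lit_val /= => ->.
Qed.

Definition literals_of c : {set literal V} := [set L | lit_val L c].

Lemma conj_val_literals_of c c' : conj_val (literals_of c) c' = (c' == c).
Proof.
apply/conj_valP/eqP => [H | -> L]; last by rewrite inE.
apply/ffunP => X; have := H (X, c X); rewrite inE /lit_val /=.
by case: (c X) => /(_ isT) // /negbTE.
Qed.

Section FullConjunction.
Variable B : {set literal V}.
Hypotheses (HB : consistent B) (Hcard : #|B| = #|V|).

Lemma full_literal X : ((X, true) \in B) || ((X, false) \in B).
Proof.
have Hinj : {in B &, injective (fun L : literal V => L.1)}.
  move=> [x b] [y b'] Hxb Hyb' /= Exy; subst y.
  by case: b b' Hxb Hyb' => [] [] // Hxb Hyb'; case: (@HB x).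
have : [set L.1 | L in B] = setT.
  by apply/eqP; rewrite eqEcard subsetT cardsT (card_in_imset Hinj) Hcard /=.
move/setP/(_ X); rewrite in_setT => /imsetP [[y b] Hyb /= EX]; subst y.
by case: b Hyb => ->; rewrite ?orbT.
Qed.

Definition assignment_of : assignment V := [ffun X => (X, true) \in B].

Lemma lit_val_assignment_of L : lit_val L assignment_of = (L \in B).
Proof.
case: L => X [] /=; rewrite /lit_val /= ffunE //.
case Ht: ((X, true) \in B) => /=.
  by apply/esym/negP => Hf; case: (@HB X).
by have := full_literal X; rewrite Ht => /= ->.
Qed.

Lemma conj_val_assignment_of S : conj_val S assignment_of = (S \subset B).
Proof.
apply/conj_valP/subsetP => H L /H; by rewrite lit_val_assignment_of.
Qed.

Lemma consistent_superset S : consistent S -> B \subset S -> S = B.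
Proof.
move=> HS HBS; apply/eqP; rewrite eqEsubset HBS andbT.
apply/subsetP => [[X b]] HXb; have /orP [] := full_literal X => HX;
  case: b HXb => // HXb; case: (HS X); split => //; exact: (subsetP HBS).
Qed.

End FullConjunction.

Section Outcomes.
Variables (Omega : Type) (D : outcomes V Omega).

Definition sufficientb S (w : Omega) : bool :=
  satisfiable S && [forall c, conj_val S c ==> D c w].

Definition minimalb S (w : Omega) : bool :=
  sufficientb S w &&
  [forall S' : {set literal V}, (S' \proper S) ==> ~~ sufficientb S' w].

Lemma sufficientbP S w :
  reflect (sufficient_cause D (fun x => x = w) S) (sufficientb S w).
Proof.
apply: (iffP andP) => [[/existsP [cs Hcs] /forallP H] | [[cs Hcs] H]].
  by split; [exists cs | move=> c Hc x ->; exact: (implyP (H c) Hc)].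
split; first by apply/existsP; exists cs.
by apply/forallP => c; apply/implyP => Hc; apply: H.
Qed.

Lemma minimalbP S w :
  reflect (minimal_sufficient_cause D (fun x => x = w) S) (minimalb S w).
Proof.
apply: (iffP andP) => [[/sufficientbP Hs /forallP Hm] | [/sufficientbP Hs Hm]].
  split => // S' HS' /sufficientbP HsS'.
  by move: (implyP (Hm S') HS'); rewrite HsS'.
split => //; apply/forallP => S'; apply/implyP => HS'.
by apply/negP => /sufficientbP; apply: Hm.
Qed.

(* Every sufficient cause contains a minimal one (take one of least size). *)
Lemma minimal_below S w :
  sufficientb S w -> exists2 S' : {set literal V}, S' \subset S & minimalb S' w.
Proof.
move=> HS; pose below S' := sufficientb S' w && (S' \subset S).
have HSS : below S by rewrite /below HS subxx.
have [S' /andP [HS' HS'S] Hleast] := arg_minnP (fun S' => #|S'|) HSS.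
exists S' => //; rewrite /minimalb HS'; apply/forallP => S''.
apply/implyP => Hprop; apply/negP => HS''; have := Hleast S''.
rewrite /below HS'' (subset_trans (proper_sub Hprop) HS'S).
by rewrite leqNgt (proper_card Hprop) => /(_ isT).
Qed.

Lemma outcome_minimal_cause c w :
  D c w = [exists S, minimalb S w && conj_val S c].
Proof.
apply/idP/existsP => [Hc | [S /andP [/andP [/andP [_ /forallP HS] _] HSc]]];
  last exact: (implyP (HS c) HSc).
have Hsuff : sufficientb (literals_of c) w.
  rewrite /sufficientb; apply/andP; split.
    by apply/existsP; exists c; rewrite conj_val_literals_of.
  by apply/forallP => c'; rewrite conj_val_literals_of; apply/implyP => /eqP ->.
have [S HSc HSw] := minimal_below Hsuff; exists S; rewrite HSw.
by apply: conj_val_sub HSc _; rewrite conj_val_literals_of.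
Qed.

Lemma irreducible_finite B (I : finType) (A : I -> Omega -> bool)
    (Bs : I -> {set literal V}) :
  irreducible D B -> (forall i, consistent (Bs i)) ->
  (forall w c, D c w = [exists i, A i w && conj_val (Bs i) c]) ->
  exists i, B \subset Bs i.
Proof.
move=> Hirr Hcons HD.
have [j Hj] : exists j : 'I_#|I|, B \subset Bs (enum_val j).
  apply: (Hirr _ (fun j => A (enum_val j))); split => [j | w c]; first exact: Hcons.
  rewrite HD; apply/existsP/existsP => [[i Hi] | [j Hj]].
    by exists (enum_rank i); rewrite enum_rankK.
  by exists (enum_val j).
by exists (enum_val j).
Qed.

(* (=>): the component explaining D at (c_B, ws) is a sufficient cause
   contained in B, hence equal to B by minimality. *)
Lemma minimal_cause_irreducible B ws : consistent B -> #|B| = #|V| ->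
  minimal_sufficient_cause D (fun w => w = ws) B -> irreducible D B.
Proof.
move=> HB Hcard [[_ HsuffB] Hmin] p A Bs [_ HD].
have conj_cB := conj_val_assignment_of HB Hcard.
have := HsuffB (assignment_of B) _ ws erefl.
rewrite conj_cB subxx HD => /(_ isT) /existsP [j /andP [HAj HBj]].
rewrite conj_cB in HBj.
exists j; case: (boolP (B \subset Bs j)) => // HnB; exfalso.
apply: (Hmin (Bs j)); first by rewrite properE HBj.
split; first by exists (assignment_of B); rewrite conj_cB.
by move=> c Hc w ->; rewrite HD; apply/existsP; exists j; rewrite HAj.
Qed.

(* (<=): otherwise the minimal sufficient causes other than B would form a
   representation none of whose components contains B. *)
Lemma irreducible_minimal_cause B : consistent B -> #|B| = #|V| ->
  irreducible D B -> exists ws, minimal_sufficient_cause D (fun w => w = ws) B.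
Proof.
move=> HB Hcard Hirr; apply: NNPP => Hnone.
(* One component for each satisfiable S <> B, active where S is minimal. *)
have [[S HS] /= HBS] :
    exists i : {S | satisfiable S && (S != B)}, B \subset val i.
  apply: (@irreducible_finite B _ (fun i => minimalb (val i)) val Hirr).
    by move=> i; case/andP: (valP i) => Hsat _; exact: satisfiable_consistent.
  move=> w c; rewrite outcome_minimal_cause.
  apply/existsP/existsP => [[S /andP [HSw HSc]] | [i Hi]]; last by exists (val i).
  have HSB : S != B.
    by apply/eqP => ESB; apply: Hnone; exists w; apply/minimalbP; rewrite -ESB.
  have Hsat : satisfiable S by case/andP: HSw => /andP [].
  by exists (exist _ S (introT andP (conj Hsat HSB))); rewrite /= HSw.
case/andP: HS => Hsat.
by rewrite (consistent_superset HB Hcard (satisfiable_consistent Hsat) HBS) eqxx.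
Qed.

End Outcomes.
End Literals.

Theorem mainTheorem3 (V : finType) (Omega : Type) (D : outcomes V Omega)
    (B : {set literal V}) (HB : consistent B) (Hcard : #|B| = #|V|) :
  (exists ws : Omega, minimal_sufficient_cause D (fun w => w = ws) B) <->
  irreducible D B.
Proof.
split; first by case=> ws; exact: minimal_cause_irreducible.
exact: irreducible_minimal_cause.
Qed.
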